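(* Let $\mathbb{X}$ be a real Banach space and let $f\in \mathbb{X}^{**}$ be weak$^*$ continuous. Let $\mathbb{Y}$ be a linear subspace of $\mathbb{X}^{**}$ such that each member of $\mathbb{Y}$ is weak$^*$ continuous and $f\notin \mathbb{Y}$. Suppose that $g_0\in \mathbb{Y}$ is a best approximation to $f$ out of $\mathbb{Y}$. Then for any finite-dimensional subspace $\mathbb{Z}$ of $\mathbb{Y}$ containing $g_0$, $$\|f-g_0\|=\mathrm{dist}(f,\mathbb{Y})=\max \Big\{ |f(x)|: x\in \bigcap_{g\in \mathbb{Z}}\mathcal{N}(g)\cap S_{\mathbb{X}^*}\Big\}.$$
   Context: A functional in $\mathbb{X}^{**}$ is weak$^*$ continuous iff it equals $\psi(x)$ for some $x\in\mathbb{X}$, $\psi$ the canonical embedding. $\mathcal{N}(h)=\{x^*\in\mathbb{X}^*:h(x^* )=0\}$; $S_{\mathbb{X}^*}$ is the unit sphere of $\mathbb{X}^*$; $\mathrm{dist}(f,\mathbb{Y})=\inf_{g\in\mathbb{Y}}\|f-g\|$, and $g_0$ is a best approximation if $\|f-g_0\|=\mathrm{dist}(f,\mathbb{Y})$. *)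

From HB Require Import structures.
From mathcomp Require Import all_boot all_order all_algebra.
From mathcomp Require Import all_classical all_reals all_analysis.
Set Implicit Arguments. Unset Strict Implicit. Unset Printing Implicit Defensive.
Import Order.TTheory GRing.Theory Num.Theory.
Import numFieldNormedType.Exports.
Local Open Scope classical_set_scope.
Local Open Scope ring_scope.

Section Duals.
Context {R : realType} {X : normedModType R}.

Definition is_dual (phi : X -> R) : Prop :=
  (forall (a : R) (x y : X), phi (a *: x + y) = a * phi x + phi y)
  /\ continuous phi.

Definition dnorm (phi : X -> R) : R :=
  sup [set `|phi x| | x in [set x : X | `|x| <= 1]].

(** X^** : bounded linear functionals on X^*.  Elements are represented as
    functions (X -> R) -> R, normalised to vanish off X^* so that the
    representation is unique. *)
Definition is_bidual (F : (X -> R) -> R) : Prop :=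
  (forall phi, ~ is_dual phi -> F phi = 0)
  /\ (forall (a : R) (phi psi : X -> R), is_dual phi -> is_dual psi ->
        F (fun x => a * phi x + psi x) = a * F phi + F psi)
  /\ (exists M : R, forall phi, is_dual phi -> `|F phi| <= M * dnorm phi).

Definition bnorm (F : (X -> R) -> R) : R :=
  sup [set `|F phi| | phi in [set phi | is_dual phi /\ dnorm phi <= 1]].

Definition canon (x : X) : (X -> R) -> R :=
  fun phi => if `[< is_dual phi >] then phi x else 0.

(** weak* continuous elements of X^** are exactly those of the form psi(x) *)
Definition weakstar_cont (F : (X -> R) -> R) : Prop :=
  is_bidual F /\ exists x : X, F = canon x.

Definition bsubspace (Y : set ((X -> R) -> R)) : Prop :=
  (forall F, Y F -> is_bidual F) /\ Y (fun _ => 0)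
  /\ (forall (a : R) F G, Y F -> Y G -> Y (fun phi => a * F phi + G phi)).

Definition fin_dim_bsubspace (Z : set ((X -> R) -> R)) : Prop :=
  exists (n : nat) (g : 'I_n -> (X -> R) -> R),
    forall F, Z F <-> exists c : 'I_n -> R,
      F = (fun phi => \sum_(i < n) c i * g i phi).

Definition bdiff (F G : (X -> R) -> R) : (X -> R) -> R :=
  fun phi => F phi - G phi.

Definition bdist (F : (X -> R) -> R) (Y : set ((X -> R) -> R)) : R :=
  inf [set bnorm (bdiff F G) | G in Y].

End Duals.

Definition is_max {R : realType} (S : set R) (v : R) : Prop :=
  S v /\ (forall w, S w -> w <= v).

(* Weak* continuous functionals are point evaluations, so f = psi x0,
   g0 = psi v0 and Z = psi M for the subspace M = psi^-1 Z of X (finite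
   dimensionality of Z is only used to know that Z is a linear space).  Since
   psi is isometric by Hahn-Banach, d := dist(f, Y) = |x0 - v0|, which is
   positive as f is not in Y, and d <= |x0 - w| for all w in M.  Hahn-Banach
   applied to w + t x0 |-> t d on M + R x0 gives a functional of norm 1 that
   vanishes on M and equals d at x0.  Conversely a norm-one functional
   vanishing on Z vanishes at v0, so |phi x0| = |phi (x0 - v0)| <= d. *)

From Pilot Require Import Defs.
From HB Require Import structures.
From mathcomp Require Import all_boot all_order all_algebra.
From mathcomp Require Import all_classical all_reals all_analysis.
From mathcomp Require Import lra ring.
Import Order.TTheory GRing.Theory Num.Theory.
Import numFieldNormedType.Exports.
Local Open Scope classical_set_scope.
Local Open Scope ring_scope.
(* [boolp] exports another [canon]. *)
Local Notation canon := Pilot.Defs.canon.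

Section HahnBanach.
Context {R : realType} {X : normedModType R}.

Definition linear_functional (phi : X -> R) : Prop :=
  forall (a : R) (x y : X), phi (a *: x + y) = a * phi x + phi y.

Lemma linear_functional0 phi : linear_functional phi -> phi 0 = 0.
Proof. by move=> lphi; have := lphi 1 0 0; rewrite scale1r addr0 mul1r; lra. Qed.

Lemma linear_functionalZ phi a x : linear_functional phi -> phi (a *: x) = a * phi x.
Proof. by move=> lphi; rewrite -[a *: x]addr0 lphi linear_functional0 // addr0. Qed.

Lemma linear_functionalB phi x y : linear_functional phi -> phi (x - y) = phi x - phi y.
Proof. by move=> lphi; rewrite addrC -scaleN1r lphi mulN1r addrC. Qed.

Definition lin_subspace (M : set X) : Prop :=
  M 0 /\ forall (a : R) (x y : X), M x -> M y -> M (a *: x + y).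

Lemma lin_subspace0 : lin_subspace [set 0].
Proof. by split=> // a x y -> ->; rewrite scaler0 addr0. Qed.

(* A linear functional defined on a subspace of [X] and bounded above by the
   norm, encoded by its graph. *)
Definition dominated_graph (G : set (X * R)) : Prop :=
  [/\ (forall x r s, G (x, r) -> G (x, s) -> r = s),
      G (0, 0),
      (forall a x r y s, G (x, r) -> G (y, s) -> G (a *: x + y, a * r + s)) &
      (forall x r, G (x, r) -> r <= `|x|)].

Lemma dominated_graphZ {G} a {x r} : dominated_graph G -> G (x, r) -> G (a *: x, a * r).
Proof. by case=> _ G00 Glin _ /(Glin a _ _ _ _)/(_ G00); rewrite !addr0. Qed.

Lemma normDZV (s : R) (w y : X) : 0 < s -> `|s^-1 *: w + y| = s^-1 * `|w + s *: y|.
Proof.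
move=> s0; have -> : s^-1 *: w + y = s^-1 *: (w + s *: y).
  by rewrite scalerDr scalerA mulVf ?lt0r_neq0 // scale1r.
by rewrite normrZ gtr0_norm ?invr_gt0.
Qed.

(* Any value between [sup (r - |w - x|)] and [inf (|w + x| - r)] over the
   graph can be assigned to [x]; the triangle inequality makes this interval
   nonempty. *)
Definition extension_value (G : set (X * R)) (x : X) : R :=
  sup [set t | exists w r, G (w, r) /\ t = r - `|w - x|].

Lemma extension_value_bounds {G} x {w r} : dominated_graph G -> G (w, r) ->
  r - `|w - x| <= extension_value G x <= `|w + x| - r.
Proof.
move=> [_ G00 Glin Gdom] Gwr; rewrite /extension_value; set L := [set t | _].
have ubL w2 r2 : G (w2, r2) -> ubound L (`|w2 + x| - r2).
  move=> G2 _ [w1 [r1 [G1 ->]]].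
  have := Gdom _ _ (Glin 1 _ _ _ _ G1 G2); rewrite scale1r mul1r.
  have : `|w1 + w2| <= `|w1 - x| + `|w2 + x|.
    have -> : w1 + w2 = (w1 - x) + (w2 + x) by rewrite addrCA subrK addrC.
    exact: ler_normD.
  lra.
have supL : has_sup L.
  by split; [exists (0 - `|0 - x|), 0, 0 | exists (`|0 + x| - 0); exact: ubL].
apply/andP; split; first by apply: sup_upper_bound => //; exists w, r.
by apply: ge_sup; [case: supL | exact: ubL].
Qed.

Lemma extension_value_dominated G x w r t : dominated_graph G -> G (w, r) ->
  r + t * extension_value G x <= `|w + t *: x|.
Proof.
move=> domG Gwr.
have [t0|t0|->] := ltgtP t 0; last first.
- by rewrite mul0r scale0r !addr0; case: domG => _ _ _; apply.
- have /andP[_] := extension_value_bounds x domG (dominated_graphZ t^-1 domG Gwr).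
  rewrite normDZV // -mulrBr ler_pdivlMl //; lra.
- have /andP[+ _] := extension_value_bounds x domG (dominated_graphZ (- t)^-1 domG Gwr).
  rewrite normDZV ?oppr_gt0 // scaleNr scalerN opprK -mulrBr ler_pdivrMl ?oppr_gt0 //; lra.
Qed.

Definition graph_extension (G : set (X * R)) (x : X) : set (X * R) :=
  [set p | exists w r t, G (w, r) /\ p = (w + t *: x, r + t * extension_value G x)].

Lemma graph_extension_sub G x : G `<=` graph_extension G x.
Proof. by case=> w r Gwr; exists w, r, 0; rewrite scale0r mul0r !addr0. Qed.

Lemma dominated_graph_extension G x : dominated_graph G -> (forall r, ~ G (x, r)) ->
  dominated_graph (graph_extension G x).
Proof.
move=> domG Gx; have [Gfun G00 Glin Gdom] := domG; split.
- move=> v r1 r2 [w1 [s1 [t1 [G1 [-> ->]]]]] [w2 [s2 [t2 [G2 []]]]] e ->.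
  have [t12|t12] := eqVneq t1 t2.
    by subst t2; move/addIr: e => ew; subst w2; rewrite (Gfun _ _ _ G1 G2).
  exfalso; apply: (Gx ((t1 - t2)^-1 * ((-1) * s1 + s2))).
  have := dominated_graphZ (t1 - t2)^-1 domG (Glin (-1) _ _ _ _ G1 G2).
  suff -> : (t1 - t2)^-1 *: ((-1) *: w1 + w2) = x by [].
  have -> : (-1) *: w1 + w2 = (t1 - t2) *: x.
    rewrite scaleN1r scalerBl; apply/eqP; rewrite eq_sym subr_eq; apply/eqP.
    by apply: (addrI w1); rewrite e !addrA subrr add0r.
  by rewrite scalerA mulVf ?scale1r // subr_eq0.
- exact: graph_extension_sub.
- move=> a v r v' r' [w1 [s1 [t1 [G1 [-> ->]]]]] [w2 [s2 [t2 [G2 [-> ->]]]]].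
  exists (a *: w1 + w2), (a * s1 + s2), (a * t1 + t2); split; first exact: Glin.
  by congr (_, _); [rewrite scalerDr scalerA scalerDl addrACA | ring].
- by move=> v r [w [s [t [Gw [-> ->]]]]]; exact: extension_value_dominated.
Qed.

Lemma dominated_graph_bigcup (F : set (set (X * R))) :
  (forall G, F G -> G !=set0 -> dominated_graph G) -> total_on F subset ->
  (\bigcup_(G in F) G) !=set0 -> dominated_graph (\bigcup_(G in F) G).
Proof.
move=> Fdom Ftot [p0 [G0 FG0 G0p0]].
have common p q : (\bigcup_(G in F) G) p -> (\bigcup_(G in F) G) q ->
    exists G, [/\ F G, dominated_graph G, G p & G q].
  move=> [Gp Fp Gpp] [Gq Fq Gqq].
  have [/(_ p Gpp) Gqp|/(_ q Gqq) Gpq] := Ftot _ _ Fp Fq.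
    by exists Gq; split => //; apply: Fdom => //; exists q.
  by exists Gp; split => //; apply: Fdom => //; exists p.
split.
- move=> x r s Gr Gs; have [G [_ [Gfun _ _ _] {}Gr {}Gs]] := common _ _ Gr Gs.
  exact: Gfun Gr Gs.
- by exists G0 => //; have [] := Fdom _ FG0 (ex_intro _ _ G0p0).
- move=> a x r y s Gr Gs; have [G [FG [_ _ Glin _] {}Gr {}Gs]] := common _ _ Gr Gs.
  by exists G => //; exact: Glin.
- by move=> x r Gr; have [G [_ [_ _ _ Gdom] {}Gr _]] := common _ _ Gr Gr; exact: Gdom.
Qed.

Lemma hahn_banach {G0} : dominated_graph G0 -> exists phi : X -> R,
  [/\ linear_functional phi, (forall x, phi x <= `|x|) &
      (forall x r, G0 (x, r) -> phi x = r)].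
Proof.
move=> domG0.
(* Required of nonempty sets only, so that [set0], the union of the empty
   chain, satisfies [P]. *)
pose P G := G !=set0 -> dominated_graph G /\ G0 `<=` G.
have [A [PA Amax]] : exists A, P A /\ forall B, A `<` B -> ~ P B.
  apply: Zorn_bigcup => F FP Ftot [p [G FG Gp]]; split.
    by apply: dominated_graph_bigcup => // [H FH /(FP H FH) []|]; last by exists p, G.
  by move=> q /(FP G FG (ex_intro _ _ Gp)).2 G0q; exists G.
have [domA G0A] : dominated_graph A /\ G0 `<=` A.
  apply: PA; apply: contrapT => A0; apply: (Amax G0); last by split.
  split; first by move=> p Ap; case: A0; exists p.
  by move=> G0A; apply: A0; exists (0, 0); apply: G0A; case: domG0.
have [Afun _ Alin Adom] := domA.
have Atotal x : exists r, A (x, r).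
  apply: contrapT => /forallNP Ax; apply: (Amax (graph_extension A x)).
    split; first exact: graph_extension_sub.
    move=> /(_ (x, extension_value A x)) extA; apply: (Ax _ (extA _)); exists 0, 0, 1.
    by split; [case: domA | rewrite scale1r mul1r !add0r].
  move=> _; split; first exact: dominated_graph_extension.
  exact: subset_trans G0A (graph_extension_sub A x).
pose phi x := xget 0 [set r | A (x, r)].
have Aphi x : A (x, phi x) := xgetPex 0 (Atotal x).
exists phi; split.
- by move=> a x y; apply: Afun (Aphi _) _; exact: Alin.
- by move=> x; exact: Adom.
- by move=> x r /G0A; exact: Afun.
Qed.

Lemma hahn_banach_dist {M : set X} {x0} {d : R} : lin_subspace M -> 0 <= d ->
  (forall w, M w -> d <= `|x0 - w|) -> exists phi : X -> R,
  [/\ linear_functional phi, (forall x, `|phi x| <= `|x|), phi x0 = d &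
      (forall w, M w -> phi w = 0)].
Proof.
move=> [M0 Mlin] d_ge0 d_le.
have domG : dominated_graph [set p | exists w t, M w /\ p = (w + t *: x0, t * d)].
  split.
  - move=> x r s [w1 [t1 [M1 [e1 ->]]]] [w2 [t2 [M2 [e2 ->]]]].
    have [->//|t12] := eqVneq t1 t2.
    (* two representations of [x] put [x0] in [M], forcing [d = 0] *)
    have Mx0 : M x0.
      have w2E : w2 = w1 + (t1 - t2) *: x0 by rewrite scalerBl addrA -e1 e2 addrK.
      have -> : x0 = (t1 - t2)^-1 *: ((-1) *: w1 + w2) + 0.
        by rewrite addr0 w2E scaleN1r addKr scalerA mulVf ?scale1r // subr_eq0.
      exact: Mlin (Mlin _ _ _ M1 M2) M0.
    have d0 : d = 0.
      by apply/le_anti; rewrite d_ge0 andbT; have := d_le _ Mx0; rewrite subrr normr0.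
    by rewrite d0 !mulr0.
  - by exists 0, 0; rewrite scale0r addr0 mul0r.
  - move=> a x r y s [w1 [t1 [M1 [-> ->]]]] [w2 [t2 [M2 [-> ->]]]].
    exists (a *: w1 + w2), (a * t1 + t2); split; first exact: Mlin.
    by congr (_, _); [rewrite scalerDr scalerA scalerDl addrACA | ring].
  - move=> x r [w [t [Mw [-> ->]]]].
    have [t_gt0|t_le0] := ltrP 0 t; last by apply: le_trans (normr_ge0 _); nra.
    have := d_le _ (Mlin (- t^-1) _ _ Mw M0).
    by rewrite addr0 scaleNr opprK addrC normDZV // ler_pdivlMl.
have [phi [lphi phi_le phiG]] := hahn_banach domG.
exists phi; split => //.
- move=> x; rewrite ler_norml phi_le andbT.
  have := phi_le (- x); rewrite normrN -sub0r linear_functionalB // linear_functional0 //.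
  lra.
- by apply: phiG; exists 0, 1; rewrite add0r scale1r mul1r.
- by move=> w Mw; apply: phiG; exists w, 0; rewrite scale0r addr0 mul0r.
Qed.

End HahnBanach.

Section Duals.
Context {R : realType} {X : normedModType R}.

Lemma dual_bounded (phi : X -> R) : is_dual phi ->
  exists2 M, 0 < M & forall x, `|phi x| <= M * `|x|.
Proof.
move=> [lphi cphi].
have : \forall t \near (0 : X), `|phi 0 - phi t| < 1.
  by apply: cvgr_dist_lt => //; exact: cphi.
rewrite linear_functional0 // => /nbhs_norm0P [e /= e_gt0 phi_lt1].
exists (2 / e) => [|x]; first by rewrite divr_gt0.
have [->|x_neq0] := eqVneq x 0; first by rewrite linear_functional0 // !normr0 mulr0.
have nx_gt0 : 0 < `|x| by rewrite normr_gt0.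
have k_gt0 : 0 < e / 2 / `|x| by rewrite !divr_gt0.
have kx_lt : `|(e / 2 / `|x|) *: x| < e.
  by rewrite normrZ gtr0_norm // divfK ?lt0r_neq0 //; lra.
have := phi_lt1 _ kx_lt; rewrite /= sub0r normrN linear_functionalZ //.
rewrite normrM gtr0_norm // => /ltW kphi_le1.
rewrite -(ler_pM2l k_gt0); apply: le_trans kphi_le1 _.
have -> : e / 2 / `|x| * (2 / e * `|x|) = 1 by field; rewrite !lt0r_neq0.
exact: lexx.
Qed.

Lemma bounded_linear_dual (phi : X -> R) M : linear_functional phi ->
  (forall x, `|phi x| <= M * `|x|) -> is_dual phi.
Proof.
move=> lphi phi_le; split => // x; apply/cvgrPdist_lt => e e_gt0.
have M1_gt0 : 0 < `|M| + 1 by rewrite ltr_pwDr // normr_ge0.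
have : \forall z \near x, `|x - z| < e / (`|M| + 1).
  by apply: cvgr_dist_lt; [exact: cvg_id | exact: divr_gt0].
apply: filterS => z xz; rewrite -linear_functionalB //.
apply: le_lt_trans (phi_le _) _; apply: (@le_lt_trans _ _ ((`|M| + 1) * `|x - z|)).
  by rewrite ler_wpM2r // (le_trans (ler_norm _)) // lerDl.
by rewrite -ltr_pdivlMl // mulrC.
Qed.

Lemma dnorm_has_sup (phi : X -> R) : is_dual phi ->
  has_sup [set `|phi x| | x in [set x : X | `|x| <= 1]].
Proof.
move=> /dual_bounded [M M_gt0 phi_le].
split; first by exists `|phi 0|, 0 => //=; rewrite normr0.
exists M => _ [x /= x_le1 <-]; apply: le_trans (phi_le x) _.
by rewrite ler_piMr // ltW.
Qed.

Lemma dnorm_bound {phi : X -> R} v : is_dual phi -> `|phi v| <= dnorm phi * `|v|.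
Proof.
move=> dphi; have [lphi _] := dphi.
have [->|v_neq0] := eqVneq v 0; first by rewrite linear_functional0 // !normr0 mulr0.
have nv_gt0 : 0 < `|v| by rewrite normr_gt0.
have : `|phi (`|v|^-1 *: v)| <= dnorm phi.
  apply: sup_upper_bound; first exact: dnorm_has_sup.
  exists (`|v|^-1 *: v) => //=.
  by rewrite normrZ normrV ?unitfE ?lt0r_neq0 // normr_id mulVf ?lt0r_neq0.
rewrite linear_functionalZ // normrM normrV ?unitfE ?lt0r_neq0 // normr_id.
by rewrite ler_pdivrMl // mulrC.
Qed.

Lemma dnorm_le (phi : X -> R) c :
  (forall x, `|x| <= 1 -> `|phi x| <= c) -> dnorm phi <= c.
Proof.
move=> phi_le; apply: ge_sup; first by exists `|phi 0|, 0 => //=; rewrite normr0.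
by move=> _ [x /= x_le1 <-]; exact: phi_le.
Qed.

Lemma dnorm_ge1 {phi : X -> R} v : is_dual phi -> 0 < `|v| -> `|v| <= phi v ->
  1 <= dnorm phi.
Proof.
move=> dphi v_gt0 v_le; rewrite -(ler_pM2r v_gt0) mul1r.
exact: le_trans v_le (le_trans (ler_norm _) (dnorm_bound v dphi)).
Qed.

Lemma dual_le_dist {psi : X -> R} x0 v0 : is_dual psi -> dnorm psi <= 1 ->
  psi v0 = 0 -> `|psi x0| <= `|x0 - v0|.
Proof.
move=> dpsi psi_le1 psiv0.
rewrite -[psi x0]subr0 -psiv0 -linear_functionalB; last by case: dpsi.
by apply: le_trans (dnorm_bound _ dpsi) _; rewrite ler_piMl.
Qed.

Lemma dual_annihilator {M : set X} {x0} {d : R} : lin_subspace M -> 0 <= d ->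
  (forall w, M w -> d <= `|x0 - w|) -> exists phi : X -> R,
  [/\ is_dual phi, dnorm phi <= 1, phi x0 = d & (forall w, M w -> phi w = 0)].
Proof.
move=> Msub d_ge0 d_le.
have [phi [lphi phi_le phix0 phiM]] := hahn_banach_dist Msub d_ge0 d_le.
exists phi; split => //.
- by apply: (bounded_linear_dual _ 1) => // x; rewrite mul1r.
- by apply: dnorm_le => x; apply: le_trans.
Qed.

Lemma canon_dual (v : X) (phi : X -> R) : is_dual phi -> canon v phi = phi v.
Proof. by move=> dphi; rewrite /canon asboolT. Qed.

Lemma canonB (x y : X) : bdiff (canon x) (canon y) = canon (x - y).
Proof.
apply/funext => phi; rewrite /bdiff /canon.
by case: asboolP => [[lphi _]|_]; rewrite ?linear_functionalB ?subr0.
Qed.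

Lemma canonDZ (a : R) (x y : X) :
  canon (a *: x + y) = (fun phi => a * canon x phi + canon y phi).
Proof.
by apply/funext => phi; rewrite /canon; case: asboolP => [[lphi _]|_]; rewrite ?mulr0 ?addr0.
Qed.

Lemma zero_dual : is_dual (fun _ : X => (0 : R)).
Proof. by split; [move=> *; rewrite mulr0 addr0 | exact: cst_continuous]. Qed.

Lemma bnorm_canon (v : X) : bnorm (canon v) = `|v|.
Proof.
rewrite /bnorm; set S := [set `|canon v phi| | phi in _].
have S_ub : ubound S `|v|.
  move=> _ [phi [dphi phi_le1] <-]; rewrite canon_dual //.
  by apply: le_trans (dnorm_bound v dphi) _; rewrite ler_piMl.
have S0 : S `|canon v (fun _ => 0)|.
  by exists (fun _ => 0) => //; split; [exact: zero_dual | apply: dnorm_le => x; rewrite normr0].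
have v_le : forall w, [set 0] w -> `|v| <= `|v - w| by move=> w ->; rewrite subr0.
have [psi [dpsi psi_le1 psiv _]] := dual_annihilator lin_subspace0 (normr_ge0 v) v_le.
apply/le_anti/andP; split; first exact: ge_sup (ex_intro _ _ S0) S_ub.
apply: sup_upper_bound; first by split; [exists (`|canon v (fun _ => 0)|) | exists `|v|].
by exists psi; rewrite // canon_dual // psiv normr_id.
Qed.

Lemma bdist_canon_le {x0 w : X} {Y : set ((X -> R) -> R)} :
  (forall g, Y g -> weakstar_cont g) -> Y (canon w) ->
  bdist (canon x0) Y <= `|x0 - w|.
Proof.
move=> Ywc Yw; rewrite -bnorm_canon -canonB; apply: ge_inf; last by exists (canon w).
by exists 0 => _ [G /Ywc [_ [u ->]] <-]; rewrite canonB bnorm_canon.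
Qed.

Lemma fin_dim_bsubspace_lin {Z : set ((X -> R) -> R)} : fin_dim_bsubspace Z ->
  forall a F G, Z F -> Z G -> Z (fun phi => a * F phi + G phi).
Proof.
move=> [n [g Zg]] a F G /Zg [c ->] /Zg [c' ->]; apply/Zg.
exists (fun i => a * c i + c' i); apply/funext => phi.
by rewrite mulr_sumr -big_split; apply: eq_bigr => i _ /=; rewrite mulrA mulrDl.
Qed.

Lemma canon_preimage_subspace {Z : set ((X -> R) -> R)} {v0} :
  fin_dim_bsubspace Z -> Z (canon v0) -> lin_subspace [set w | Z (canon w)].
Proof.
move=> /fin_dim_bsubspace_lin Zlin Zv0; split => [|a x y Zx Zy] /=.
  by rewrite -(addNr v0) -scaleN1r canonDZ; exact: Zlin.
by rewrite canonDZ; exact: Zlin.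
Qed.

End Duals.

Theorem theorem4p3 (R : realType) (X : completeNormedModType R)
  (f : (X -> R) -> R) (Y : set ((X -> R) -> R)) (g0 : (X -> R) -> R) :
  weakstar_cont f ->
  bsubspace Y ->
  (forall g, Y g -> weakstar_cont g) ->
  ~ Y f ->
  Y g0 -> bnorm (bdiff f g0) = bdist f Y ->
  forall Z : set ((X -> R) -> R),
    fin_dim_bsubspace Z -> Z `<=` Y -> Z g0 ->
    bnorm (bdiff f g0) = bdist f Y /\
    is_max [set `|f phi| | phi in
              [set phi : X -> R | (forall g, Z g -> g phi = 0)
                                  /\ is_dual phi /\ dnorm phi = 1]]
           (bdist f Y).
Proof.
move=> [_ [x0 ->]] _ Ywc nYf Yg0 best Z Zfin ZY Zg0; split => //.
have [_ [v0 g0E]] := Ywc _ Yg0; subst g0.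
pose M := [set w | Z (canon w)].
have Msub : lin_subspace M := canon_preimage_subspace Zfin Zg0.
have ZM g : Z g -> exists2 w, M w & g = canon w.
  by move=> Zg; have [_ [w gE]] := Ywc _ (ZY _ Zg); exists w; rewrite // /M /= -gE.
have distE : bdist (canon x0) Y = `|x0 - v0| by rewrite -best canonB bnorm_canon.
have dist_gt0 : 0 < `|x0 - v0|.
  by rewrite normr_gt0 subr_eq0; apply: contra_notN nYf => /eqP ->.
have dist_le w : M w -> `|x0 - v0| <= `|x0 - w|.
  by move=> Mw; rewrite -distE; exact: bdist_canon_le Ywc (ZY _ Mw).
have [phi [dphi phi_le1 phix0 phiM]] := dual_annihilator Msub (ltW dist_gt0) dist_le.
rewrite distE; split.
- exists phi; last by rewrite canon_dual // phix0 normr_id.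
  split; first by move=> g /ZM [w Mw ->]; rewrite canon_dual // phiM.
  split => //; apply/le_anti; rewrite phi_le1 /=; apply: (dnorm_ge1 (x0 - v0)) => //.
  rewrite (linear_functionalB phi); last by case: dphi.
  by rewrite (phiM v0 Zg0) subr0 phix0.
- move=> _ [psi [psiZ [dpsi psi_norm1]] <-]; rewrite canon_dual //.
  by apply: dual_le_dist; rewrite ?psi_norm1 // -(canon_dual v0 _ dpsi) (psiZ _ Zg0).
Qed.
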